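(* For any two elements $w,w'\in W(M)$ one has $l_M(ww')=l_M(w)+l_M(w')$ if and only if $l(ww')=l(w)+l(w')$.
   Context: Let $F$ be a non-archimedean local field and $G$ the group of $F$-points of a connected reductive group over $F$. Fix a minimal parabolic subgroup $P_0=M_0U_0$, a maximal $F$-split torus $A_0\subseteq M_0$, and a standard parabolic subgroup $P=MU\supseteq P_0$ with $M\supseteq M_0$. Let $W=W^G$ be the Weyl group of $G$ with respect to $A_0$, $W^M$ that of $M$, and $l$ the usual length function on $W$ (with respect to the simple roots defined by $P_0$). $W(M)$ denotes the set of elements of $W$ that are of minimal length in their coset $wW^M$, for $w$ running over $\{w\in W: w^{-1}Mw=M\}$; it is a subgroup of $W$. Let $A_M$ be the maximal split central torus of $M$, $\Sigma(A_M)$ the set of nontrivial roots of $A_M$ in the Lie algebra of $G$, $\Sigma(P)$ those occurring in the Lie algebra of $U$, and $\Sigma_{red}(\cdot)$ the reduced roots in a given set; $\overline P$ is the parabolic opposite to $P$ with Levi $M$. For $w\in W(M)$ put $l_M(w)=|\Sigma_{red}(P)\cap\Sigma_{red}(w\overline{P}w^{-1})|$. *)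

From HB Require Import structures.
From mathcomp Require Import all_boot all_order all_algebra.
From Stdlib Require Import ClassicalEpsilon.
Set Implicit Arguments. Unset Strict Implicit. Unset Printing Implicit Defensive.
Import Order.TTheory GRing.Theory Num.Theory.
Local Open Scope ring_scope.

Definition pb (P : Prop) : bool :=
  if excluded_middle_informative P then true else false.

Section RootDatum.
Variables (R : realFieldType) (n : nat).
Implicit Types (a b x : 'cV[R]_n) (Phi D : seq 'cV[R]_n) (w v : 'M[R]_n).

(* W-invariant inner product on a_0^* = R^n (column vectors) *)
Definition dot (u v : 'cV[R]_n) : R := (u^T *m v) 0 0.

Definition cartan b a : R := 2 * dot b a / dot a a.

Definition reflmx a : 'M[R]_n := 1%:M - (2 / dot a a) *: (a *m a^T).

(* a (possibly non-reduced) crystallographic root system, listed without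
   repetition *)
Definition root_system Phi : Prop :=
  [/\ uniq Phi, (0 : 'cV[R]_n) \notin Phi,
      {in Phi &, forall a b, reflmx a *m b \in Phi} &
      {in Phi &, forall a b, exists z : int, cartan b a = z%:~R}].

Definition nonneg_comb D x : Prop :=
  exists c : 'I_(size D) -> nat, x = \sum_(i < size D) (c i)%:R *: D`_i.

Definition lin_indep D : Prop :=
  forall c : 'I_(size D) -> R, \sum_(i < size D) c i *: D`_i = 0 ->
    forall i, c i = 0.

(* D = Delta_0 is a set of simple roots (a base) of Phi, corresponding to P_0 *)
Definition base Phi D : Prop :=
  [/\ uniq D, {subset D <= Phi}, lin_indep D &
      forall a, a \in Phi -> nonneg_comb D a \/ nonneg_comb D (- a)].

Definition posb D a : bool := pb (nonneg_comb D a).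

Definition refl_word (s : seq 'cV[R]_n) : 'M[R]_n :=
  foldr (fun a M => reflmx a *m M) 1%:M s.

(* group generated by the reflections s_a, a in S (S = Phi gives the Weyl
   group W = W^G, S = Phi_M gives W^M) *)
Definition in_gen (S : seq 'cV[R]_n) w : Prop :=
  exists2 s, {subset s <= S} & w = refl_word s.

Definition has_word D w (k : nat) : Prop :=
  exists s : seq 'I_(size D), size s = k /\ w = refl_word [seq D`_(nat_of_ord i) | i : 'I_(size D) <- s].

(* the usual length function l (word length in the simple reflections);
   0 if w is not a product of simple reflections *)
Definition len D w : nat :=
  match excluded_middle_informative
          (exists k, (fun k => pb (has_word D w k)) k) with
  | left ex => ex_minn ex
  | right _ => 0%N
  end.

(* The standard Levi M is given by a subset T of the simple roots *)
Variable (D : seq 'cV[R]_n) (T : {set 'I_(size D)}).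
Definition Theta : seq 'cV[R]_n := [seq D`_(nat_of_ord i) | i : 'I_(size D) <- enum T].

(* roots of A_0 in Lie M: roots in the span of Theta *)
Definition in_span_Theta x : Prop :=
  exists c : 'I_(size Theta) -> R, x = \sum_(i < size Theta) c i *: Theta`_i.
Definition PhiM Phi : seq 'cV[R]_n := [seq a <- Phi | pb (in_span_Theta a)].

(* restriction of characters from A_0 to A_M = orthogonal projection
   onto the orthogonal complement of span Theta *)
Definition ThetaMx : 'M[R]_(size Theta, n) :=
  \matrix_(i < size Theta, j < n) (Theta`_i) j 0.
Definition proj x : 'cV[R]_n :=
  x - ThetaMx^T *m invmx (ThetaMx *m ThetaMx^T) *m ThetaMx *m x.

Definition SigmaAM Phi : seq 'cV[R]_n :=
  undup [seq proj a | a <- Phi & proj a != 0].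
Definition SigmaP Phi : seq 'cV[R]_n :=
  undup [seq proj a | a <- Phi & posb D a && (proj a != 0)].
Definition SigmaPbar Phi : seq 'cV[R]_n := [seq - b | b <- SigmaP Phi].
(* Sigma(w Pbar w^-1) = w . Sigma(Pbar) *)
Definition SigmaWPbar Phi w : seq 'cV[R]_n := [seq w *m b | b <- SigmaPbar Phi].

Definition reduced_in (X : seq 'cV[R]_n) b : Prop :=
  forall t : R, 0 < t < 1 -> t *: b \notin X.
Definition Sred (X : seq 'cV[R]_n) : seq 'cV[R]_n :=
  [seq b <- X | pb (reduced_in X b)].

Definition lM Phi w : nat :=
  count (fun b => b \in Sred (SigmaWPbar Phi w)) (Sred (SigmaP Phi)).

(* W(M): w in W with w^{-1} M w = M (i.e. w(Phi_M) = Phi_M), of minimal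
   length in w W^M *)
Definition in_WM Phi w : Prop :=
  [/\ in_gen Phi w,
      [seq w *m a | a <- PhiM Phi] =i PhiM Phi &
      forall v, in_gen (PhiM Phi) v -> (len D w <= len D (w *m v))%N].

End RootDatum.

(* For a finite set X of vectors with X and -X disjoint and a signed
   permutation g of X \cup -X, let N_X(g) count the x in X with g x in -X.
   Reindexing along the permutation of X sending x to whichever of +-g x lies
   in X gives N(fg) + 2 #{x in X | g x in -X, fg x in X} = N(f) + N(g), so
   N(fg) = N(f) + N(g) exactly when f keeps negative every g x in -X.
   With X the reduced positive roots, N_X(w) is the length l(w); with Y the
   reduced elements of Sigma(P), N_Y(w) is l_M(w).  An element w' of W(M)
   is of minimal length in w' W^M, hence keeps the positive roots of M
   positive, so the roots of X it makes negative lie outside Lie M; projecting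
   them to a_M and rescaling them to reduced ones matches them with the
   elements of Y that w' makes negative, compatibly with the action of w. *)

From HB Require Import structures.
From mathcomp Require Import all_boot all_order all_algebra.
From Stdlib Require Import ClassicalEpsilon.
From mathcomp Require Import ring zify.
Set Implicit Arguments. Unset Strict Implicit. Unset Printing Implicit Defensive.
Import Order.TTheory GRing.Theory Num.Theory.
Local Open Scope ring_scope.

Lemma pbP (P : Prop) : reflect P (pb P).
Proof. by rewrite /pb; case: excluded_middle_informative => h; constructor. Qed.

(** * Signed permutations and their inversion counts *)

Section Count.
Variable T : eqType.
Implicit Types (s : seq T) (a b c d : pred T).

Lemma count_eq0P a s : reflect {in s, forall x, ~~ a x} (count a s == 0%N).
Proof. by rewrite eqn0Ngt -has_count; apply: hasPn. Qed.

Lemma eq_count_lincomb a b c d k s :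
  {in s, forall x, (a x + k * b x = c x + d x)%N} ->
  (count a s + k * count b s = count c s + count d s)%N.
Proof.
elim: s => [|x s IHs] h /=; first by rewrite muln0.
rewrite mulnDr addnACA h ?mem_head // IHs; first by rewrite addnACA.
by move=> y ys; apply: h; rewrite in_cons ys orbT.
Qed.

Lemma sub_in_count a b s : {in s, forall x, a x -> b x} -> (count a s <= count b s)%N.
Proof.
elim: s => [//|x s IHs] ab /=; apply: leq_add; last first.
  by apply: IHs => y ys; apply: ab; rewrite in_cons ys orbT.
by case ax: (a x); rewrite // (ab x (mem_head _ _) ax).
Qed.

Lemma sub_in_count_lt a b s x0 : {in s, forall x, a x -> b x} ->
  x0 \in s -> b x0 -> ~~ a x0 -> (count a s < count b s)%N.
Proof.
elim: s => [//|x s IHs] ab /=.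
have ab' : {in s, forall y, a y -> b y} by move=> y ys; apply: ab; rewrite in_cons ys orbT.
rewrite in_cons => /orP[/eqP <-|x0s] bx0 ax0.
  by rewrite (negbTE ax0) bx0 add0n add1n ltnS sub_in_count.
case ax: (a x); first by rewrite (ab x (mem_head _ _) ax) ltn_add2l IHs.
by rewrite add0n (leq_trans (IHs ab' x0s bx0 ax0)) // leq_addl.
Qed.

Lemma count_le_inj a b (f : T -> T) s : uniq s -> {in s &, injective f} ->
  {in s, forall x, a x -> f x \in s /\ b (f x)} -> (count a s <= count b s)%N.
Proof.
move=> us fi fab; rewrite -!size_filter -(size_map f); apply: uniq_leq_size.
  rewrite map_inj_in_uniq ?filter_uniq // => x y.
  by rewrite !mem_filter => /andP[_ xs] /andP[_ ys]; apply: fi.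
move=> y /mapP[x]; rewrite mem_filter => /andP[ax xs] ->.
by have [fxs bfx] := fab x xs ax; rewrite mem_filter bfx fxs.
Qed.

End Count.

Section SignedPermutation.
Variables (V : zmodType) (X : seq V).
Hypotheses (uniqX : uniq X) (X_antisym : {in X, forall x, - x \notin X}).

Definition inv_count (g : V -> V) := count (fun x => - g x \in X) X.

Definition signed_perm (g : V -> V) :=
  [/\ injective g, {morph g : x / - x} &
      {in X, forall x, (g x \in X) || (- g x \in X)}].

Lemma signed_perm_memN g x : signed_perm g -> x \in X -> (g x \in X) = (- g x \notin X).
Proof.
case=> _ _ gX xX; have := gX x xX.
by case E: (g x \in X) => /= h; rewrite ?h // (negbTE (X_antisym E)).
Qed.

(* Sending [x] to whichever of [g x], [- g x] lies in [X] permutes [X]. *)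
Lemma inv_count_cocycle f g : signed_perm f -> signed_perm g ->
  (inv_count (f \o g) + 2 * count (fun x => (- g x \in X) && (f (g x) \in X)) X
   = inv_count f + inv_count g)%N.
Proof.
move=> sf sg; case: (sg) => gi gN gX; case: (sf) => _ fN _.
pose sgn x := if - g x \in X then - g x else g x.
have sgnX : {in X, forall x, sgn x \in X}.
  by move=> x xX; rewrite /sgn; case: ifP => // h; have := gX x xX; rewrite h orbF.
have sgn_inj : {in X &, injective sgn}.
  move=> x y xX yX; rewrite /sgn; case: ifP => hx; case: ifP => hy.
  - by move/oppr_inj/gi.
  - by rewrite -gN => /gi exy; have := X_antisym xX; rewrite exy yX.
  - by rewrite -gN => /gi exy; have := X_antisym yX; rewrite -exy xX.
  - by move/gi.
have sgn_perm : perm_eq (map sgn X) X.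
  have usgn : uniq (map sgn X) by rewrite map_inj_in_uniq.
  have sub : {subset map sgn X <= X} by move=> y /mapP[z zX ->]; apply: sgnX.
  have [_ eX] := uniq_min_size usgn sub (eq_leq (esym (size_map _ _))).
  exact: uniq_perm.
have -> : inv_count f = count (fun x => - f (sgn x) \in X) X.
  by rewrite /inv_count -(permP sgn_perm) count_map.
rewrite /inv_count; apply: eq_count_lincomb => x xX /=.
rewrite /sgn; case: ifP => gx /=; last by rewrite muln0.
rewrite fN opprK; have := signed_perm_memN sf gx; rewrite fN opprK => ->.
by case: (f (g x) \in X).
Qed.

Lemma inv_count_additive f g : signed_perm f -> signed_perm g ->
  inv_count (f \o g) = (inv_count f + inv_count g)%N <->
  {in X, forall x, - g x \in X -> - f (g x) \in X}.
Proof.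
move=> sf sg; rewrite -(inv_count_cocycle sf sg).
have [_ fN _] := sf.
have fgN x : - g x \in X -> (- f (g x) \in X) = (f (g x) \notin X).
  by move=> gx; have := signed_perm_memN sf gx; rewrite fN opprK.
set c := count _ X.
have -> : (inv_count (f \o g) = inv_count (f \o g) + 2 * c)%N <-> c = 0%N.
  split=> [/eqP|->]; last by rewrite muln0 addn0.
  by rewrite -{1}[inv_count _]addn0 eqn_add2l eq_sym muln_eq0 => /eqP.
split=> [/eqP/count_eq0P h x xX gx | h].
  by have := h x xX; rewrite gx fgN.
apply/eqP/count_eq0P => x xX; apply/negP => /andP[gx fgx].
by have := h x xX gx; rewrite fgN // fgx.
Qed.

Lemma inv_count_inv f g : signed_perm f -> signed_perm g ->
  cancel f g -> cancel g f -> inv_count f = inv_count g.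
Proof.
move=> [fi fN _] [gi gN _] fK gK; apply/eqP; rewrite eqn_leq.
apply/andP; split.
  apply: (count_le_inj (f := fun x => - f x)) => //; first by move=> x y _ _ /oppr_inj/fi.
  by move=> x xX fx; rewrite gN fK opprK.
apply: (count_le_inj (f := fun x => - g x)) => //; first by move=> x y _ _ /oppr_inj/gi.
by move=> x xX gx; rewrite fN gK opprK.
Qed.

End SignedPermutation.

(** * Orthogonal matrices and reflections *)

Section Euclidean.
Variables (R : realFieldType) (n : nat).
Implicit Types (a b x y z : 'cV[R]_n) (u v : 'M[R]_n).

Lemma dotC x y : dot x y = dot y x.
Proof. by rewrite /dot !mxE; apply: eq_bigr => i _; rewrite !mxE mulrC. Qed.

Lemma dot_eq0 x : (dot x x == 0) = (x == 0).
Proof.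
have dotE : dot x x = \sum_i x i 0 ^+ 2.
  by rewrite /dot mxE; apply: eq_bigr => i _; rewrite mxE expr2.
apply/idP/idP; last by move/eqP->; rewrite /dot trmx0 mul0mx mxE.
rewrite dotE psumr_eq0 => [/allP x0|i _]; last exact: sqr_ge0.
apply/eqP/matrixP => i j; rewrite (ord1 j) mxE.
by have := x0 i (mem_index_enum _); rewrite sqrf_eq0 => /eqP.
Qed.

Lemma dot_gt0 x : x != 0 -> 0 < dot x x.
Proof.
move=> x0; rewrite lt_def dot_eq0 x0 /dot mxE.
by apply: sumr_ge0 => i _; rewrite mxE -expr2 sqr_ge0.
Qed.

Lemma dotDl x y z : dot (x + y) z = dot x z + dot y z.
Proof. by rewrite /dot linearD /= mulmxDl mxE. Qed.

Lemma dotZl (t : R) x z : dot (t *: x) z = t * dot x z.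
Proof. by rewrite /dot linearZ /= -scalemxAl mxE. Qed.

Lemma dotNl x z : dot (- x) z = - dot x z.
Proof. by rewrite -scaleN1r dotZl mulN1r. Qed.

Lemma dotNr x z : dot z (- x) = - dot z x.
Proof. by rewrite dotC dotNl dotC. Qed.

Lemma dotDr x y z : dot z (x + y) = dot z x + dot z y.
Proof. by rewrite dotC dotDl !(dotC z). Qed.

Lemma dotZr (t : R) x z : dot z (t *: x) = t * dot z x.
Proof. by rewrite dotC dotZl dotC. Qed.

Lemma dot_suml (I : Type) (r : seq I) (P : pred I) (F : I -> 'cV[R]_n) y :
  dot (\sum_(i <- r | P i) F i) y = \sum_(i <- r | P i) dot (F i) y.
Proof.
elim/big_rec2: _ => [|i x1 x2 _ <-]; last by rewrite dotDl.
by rewrite /dot trmx0 mul0mx mxE.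
Qed.

Lemma dot_mulmxl u x y : dot (u *m x) y = dot x (u^T *m y).
Proof. by rewrite /dot trmx_mul mulmxA. Qed.

Lemma dot_mulmxr u x y : dot x (u *m y) = dot (u^T *m x) y.
Proof. by rewrite dotC dot_mulmxl dotC. Qed.

Definition orthomx u := u^T *m u = 1%:M /\ u *m u^T = 1%:M.

Lemma orthomx1 : orthomx 1%:M.
Proof. by split; rewrite trmx1 mulmx1. Qed.

Lemma orthomxM u v : orthomx u -> orthomx v -> orthomx (u *m v).
Proof.
case=> uTu uuT [vTv vvT]; split; rewrite trmx_mul.
  by rewrite mulmxA -(mulmxA _ _ u) uTu mulmx1 vTv.
by rewrite mulmxA -(mulmxA _ v) vvT mulmx1 uuT.
Qed.

Lemma orthomxK u x : orthomx u -> u^T *m (u *m x) = x.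
Proof. by case=> uTu _; rewrite mulmxA uTu mul1mx. Qed.

Lemma orthomxKV u x : orthomx u -> u *m (u^T *m x) = x.
Proof. by case=> _ uuT; rewrite mulmxA uuT mul1mx. Qed.

Lemma orthomx_inj u : orthomx u -> injective (mulmx u : 'cV[R]_n -> 'cV[R]_n).
Proof. by move=> uo x y /(congr1 (mulmx u^T)); rewrite !orthomxK. Qed.

Lemma orthomx_eq0 u x : orthomx u -> (u *m x == 0) = (x == 0).
Proof.
move=> uo; apply/eqP/eqP => [ux0|->]; last exact: mulmx0.
by apply: (orthomx_inj uo); rewrite ux0 mulmx0.
Qed.

Lemma reflmxE a b : reflmx a *m b = b - cartan b a *: a.
Proof.
rewrite /reflmx /cartan mulmxBl mul1mx -scalemxAl -mulmxA; congr (_ - _).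
have -> : a^T *m b = (dot a b)%:M.
  by apply/matrixP=> i j; rewrite (ord1 i) (ord1 j) [RHS]mxE eqxx mulr1n.
by rewrite mul_mx_scalar scalerA dotC mulrAC.
Qed.

Lemma trmx_reflmx a : (reflmx a)^T = reflmx a.
Proof. by rewrite /reflmx linearB /= trmx1 linearZ /= trmx_mul trmxK. Qed.

Lemma reflmx_id a : a != 0 -> reflmx a *m a = - a.
Proof.
move=> a0; rewrite reflmxE /cartan mulfK ?gt_eqF ?dot_gt0 //.
by rewrite scaler_nat mulr2n opprD addrA subrr add0r.
Qed.

Lemma reflmxK a : a != 0 -> reflmx a *m reflmx a = 1%:M.
Proof.
move=> a0; have aTs : a^T *m reflmx a = - a^T.
  by rewrite -[reflmx a]trmx_reflmx -trmx_mul reflmx_id // linearN.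
rewrite {1}/reflmx mulmxBl mul1mx -scalemxAl -mulmxA aTs mulmxN scalerN opprK.
by rewrite /reflmx addrNK.
Qed.

Lemma orthomx_reflmx a : a != 0 -> orthomx (reflmx a).
Proof. by move=> a0; rewrite /orthomx trmx_reflmx reflmxK. Qed.

Lemma reflmxZ (t : R) a : t != 0 -> reflmx (t *: a) = reflmx a.
Proof.
move=> t0; have [->|a0] := eqVneq a 0; first by rewrite scaler0.
have aa0 : dot a a != 0 by rewrite gt_eqF ?dot_gt0.
rewrite /reflmx; have -> : (t *: a)^T = t *: a^T by apply/matrixP => i j; rewrite !mxE.
rewrite dotZl dotZr -scalemxAl -scalemxAr !scalerA; congr (_ - _ *: _).
by field; rewrite aa0 t0.
Qed.

Lemma reflmxN a : reflmx (- a) = reflmx a.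
Proof. by rewrite -scaleN1r reflmxZ // oppr_eq0 oner_eq0. Qed.

Lemma reflmx_conj u a : orthomx u -> u *m reflmx a *m u^T = reflmx (u *m a).
Proof.
case=> uTu uuT; rewrite /reflmx mulmxBr mulmxBl mulmx1 uuT; congr (_ - _).
rewrite -scalemxAr -scalemxAl dot_mulmxl mulmxA uTu mul1mx.
by rewrite !mulmxA trmx_mul -!mulmxA.
Qed.

End Euclidean.

(** * Roots, simple reflections and the length function *)

Section RootSystem.
Variables (R : realFieldType) (n : nat) (Phi D : seq 'cV[R]_n).
Hypotheses (rsPhi : root_system Phi) (baseD : base Phi D).
Local Notation V := 'cV[R]_n.
Local Notation pos := (nonneg_comb D).
Local Notation m := (size D).

Lemma uniq_roots : uniq Phi. Proof. by case: rsPhi. Qed.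

Lemma root_neq0 a : a \in Phi -> a != 0.
Proof. by case: rsPhi => _ Phi0 _ _ aPhi; apply: contraNneq Phi0 => <-. Qed.

Lemma reflmx_root a b : a \in Phi -> b \in Phi -> reflmx a *m b \in Phi.
Proof. by case: rsPhi => _ _ sPhi _; apply: sPhi. Qed.

Lemma rootN a : a \in Phi -> - a \in Phi.
Proof. by move=> aPhi; rewrite -reflmx_id ?root_neq0 // reflmx_root. Qed.

Lemma cartan_int a b : a \in Phi -> b \in Phi -> exists z : int, cartan b a = z%:~R.
Proof. by case: rsPhi => _ _ _ cPhi; apply: cPhi. Qed.

Lemma simple_root (i : 'I_m) : D`_i \in Phi.
Proof. by case: baseD => _ DPhi _ _; apply: DPhi; rewrite mem_nth. Qed.

Lemma simple_neq0 (i : 'I_m) : D`_i != 0.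
Proof. exact: root_neq0 (simple_root i). Qed.

Lemma root_sign a : a \in Phi -> pos a \/ pos (- a).
Proof. by case: baseD => _ _ _; apply. Qed.

Lemma simple_coef_inj (c c' : 'I_m -> R) :
  \sum_i c i *: D`_i = \sum_i c' i *: D`_i -> forall i, c i = c' i.
Proof.
move=> e i; case: baseD => _ _ freeD _; apply/eqP; rewrite -subr_eq0; apply/eqP.
apply: (freeD (fun j => c j - c' j)).
rewrite (eq_bigr (fun j => c j *: D`_j - c' j *: D`_j)) ?sumrB ?e ?subrr //.
by move=> j _; rewrite scalerBl.
Qed.

Lemma pos0 : pos 0.
Proof. by exists (fun _ => 0%N); rewrite big1 // => i _; rewrite scale0r. Qed.

Lemma posD x y : pos x -> pos y -> pos (x + y).
Proof.
case=> c -> [c' ->]; exists (fun i => c i + c' i)%N.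
by rewrite -big_split; apply: eq_bigr => i _; rewrite natrD scalerDl.
Qed.

Lemma posZ (k : nat) x : pos x -> pos (k%:R *: x).
Proof.
case=> c ->; exists (fun i => k * c i)%N.
by rewrite scaler_sumr; apply: eq_bigr => i _; rewrite natrM scalerA.
Qed.

Lemma pos_sum (I : Type) (r : seq I) (P : pred I) (F : I -> V) :
  (forall i, P i -> pos (F i)) -> pos (\sum_(i <- r | P i) F i).
Proof. by move=> h; apply: big_ind => //; [exact: pos0 | exact: posD]. Qed.

Lemma pos_simple (i : 'I_m) : pos D`_i.
Proof.
exists (fun j => (j == i : nat)); rewrite (bigD1 i) //= eqxx scale1r big1 ?addr0 //.
by move=> j /negbTE ->; rewrite scale0r.
Qed.

Lemma pos_antisym x : pos x -> pos (- x) -> x = 0.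
Proof.
case=> c ex [c' ex'].
have e : \sum_i ((c i + c' i)%N)%:R *: D`_i = \sum_(i < m) (0 : R) *: D`_i.
  transitivity (x + - x); last by rewrite subrr big1 // => i _; rewrite scale0r.
  by rewrite ex' {1}ex -big_split; apply: eq_bigr => i _; rewrite natrD scalerDl.
rewrite ex big1 // => i _; have /eqP := simple_coef_inj e i.
by rewrite pnatr_eq0 addn_eq0 => /andP[/eqP -> _]; rewrite scale0r.
Qed.

Lemma root_pos_negF a : a \in Phi -> pos a -> pos (- a) -> False.
Proof. by move=> aPhi pa pNa; have := root_neq0 aPhi; rewrite (pos_antisym pa pNa) eqxx. Qed.

Lemma pos_scale_simple (i : 'I_m) (t : R) : pos (t *: D`_i) -> exists k : nat, t = k%:R.
Proof.
case=> c ec; exists (c i).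
have e : \sum_j (t * (j == i)%:R) *: D`_j = \sum_j (c j)%:R *: D`_j.
  rewrite -ec (bigD1 i) //= eqxx mulr1 big1 ?addr0 // => j /negbTE ->.
  by rewrite mulr0 scale0r.
by have := simple_coef_inj e i; rewrite eqxx mulr1.
Qed.

Lemma simple_multiple_root (i : 'I_m) (k : nat) :
  k%:R *: D`_i \in Phi -> (k == 1%N) || (k == 2%N).
Proof.
case: k => [|[|[|k]]] // kiPhi; first by have := root_neq0 kiPhi; rewrite scale0r eqxx.
have [z ez] := cartan_int kiPhi (simple_root i).
have ii0 : dot D`_i D`_i != 0 by rewrite gt_eqF // dot_gt0 // simple_neq0.
have zE : z%:~R = 2 / (k.+3)%:R :> R.
  by rewrite -ez /cartan !dotZl !dotZr; field; rewrite ii0 andbT -natrD pnatr_eq0.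
have z_gt0 : (0 : R) < z%:~R by rewrite zE divr_gt0 ?ltr0n.
have z_lt1 : z%:~R < (1 : R) by rewrite zE ltr_pdivrMr ?ltr0n // mul1r ltr_nat.
by rewrite ltr0z in z_gt0; rewrite ltrz1 in z_lt1; lia.
Qed.

(* Reducedness in [Phi] is tested against [a / 2] only: the positive roots
   proportional to a simple root [D`_i] are [D`_i] and possibly [2 D`_i]. *)
Definition red (a : V) := (2^-1 *: a) \notin Phi.

Lemma redN a : red (- a) = red a.
Proof.
rewrite /red scalerN; apply/negb_inj; rewrite !negbK.
by apply/idP/idP => /rootN //; rewrite opprK.
Qed.

Lemma red_simple (i : 'I_m) : red D`_i.
Proof.
apply/negP => hiPhi; case: (root_sign hiPhi); last rewrite -scaleNr.
  move/pos_scale_simple => [[|k] hk].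
    by move/eqP: hk; rewrite invr_eq0 pnatr_eq0.
  have : (2^-1 : R) < 1 by rewrite invf_lt1 ?ltr1n.
  by rewrite hk le_gtF // ler1n.
move/pos_scale_simple => [k hk].
have : (- 2^-1 : R) < 0 by rewrite oppr_lt0 invr_gt0 ltr0n.
by rewrite hk le_gtF.
Qed.

Lemma reflmx_simple_pos_coef (i : 'I_m) c (k : 'I_m -> nat) :
  c \in Phi -> c = \sum_j (k j)%:R *: D`_j -> (exists2 l, l != i & k l != 0%N) ->
  pos (reflmx D`_i *m c).
Proof.
move=> cPhi ec [l li kl].
have scPhi : reflmx D`_i *m c \in Phi by rewrite reflmx_root ?simple_root.
case: (root_sign scPhi) => // -[k' ek']; exfalso.
pose z := cartan c D`_i.
have e : \sum_j ((k j + k' j)%N)%:R *: D`_j = \sum_j (if j == i then z else 0) *: D`_j.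
  rewrite (eq_bigr (fun j => (k j)%:R *: D`_j + (k' j)%:R *: D`_j)); last first.
    by move=> j _; rewrite natrD scalerDl.
  rewrite big_split /= -ec -ek' reflmxE opprB addrCA subrr addr0.
  by rewrite (bigD1 i) //= eqxx big1 ?addr0 // => j /negbTE ->; rewrite scale0r.
have /eqP := simple_coef_inj e l.
by rewrite (negbTE li) pnatr_eq0 addn_eq0 (negbTE kl).
Qed.

Lemma reflmx_simple_pos (i : 'I_m) c :
  c \in Phi -> red c -> pos c -> c != D`_i -> pos (reflmx D`_i *m c).
Proof.
move=> cPhi rc [k ek] ci.
case: (boolP [exists l, (l != i) && (k l != 0%N)]) => [/existsP[l /andP[li kl]]|].
  by apply: (reflmx_simple_pos_coef cPhi ek); exists l.
rewrite negb_exists => /forallP kS.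
have ec : c = (k i)%:R *: D`_i.
  rewrite ek (bigD1 i) //= big1 ?addr0 // => j ji.
  by have := kS j; rewrite ji /= negbK => /eqP ->; rewrite scale0r.
have := @simple_multiple_root i (k i); rewrite -ec => /(_ cPhi) /orP[]/eqP ki.
  by move: ci; rewrite ec ki scale1r eqxx.
move/negP: rc; rewrite ec ki scalerA mulVf ?scale1r ?simple_root //.
by rewrite pnatr_eq0.
Qed.

Lemma refl_word_cat (s t : seq V) : refl_word (s ++ t) = refl_word s *m refl_word t.
Proof. by elim: s => [|a s IHs] /=; rewrite ?mul1mx // IHs mulmxA. Qed.

Lemma refl_word_rcons (s : seq V) a : refl_word (rcons s a) = refl_word s *m reflmx a.
Proof. by rewrite -cats1 refl_word_cat /= mulmx1. Qed.

Lemma trmx_refl_word (s : seq V) : (refl_word s)^T = refl_word (rev s).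
Proof.
elim: s => [|a s IHs] /=; first by rewrite trmx1.
by rewrite trmx_mul IHs trmx_reflmx rev_cons refl_word_rcons.
Qed.

Lemma gen_orthomx w : in_gen Phi w -> orthomx w.
Proof.
case=> s sPhi ->; elim: s sPhi => [|a s IHs] sPhi /=; first exact: orthomx1.
apply: orthomxM; first by apply/orthomx_reflmx/root_neq0/sPhi; rewrite mem_head.
by apply: IHs => b bs; apply: sPhi; rewrite in_cons bs orbT.
Qed.

Lemma gen_root w a : in_gen Phi w -> a \in Phi -> w *m a \in Phi.
Proof.
case=> s sPhi -> aPhi; elim: s sPhi => [|b s IHs] sPhi /=; first by rewrite mul1mx.
rewrite -mulmxA reflmx_root //; first by apply: sPhi; rewrite mem_head.
by apply: IHs => c cs; apply: sPhi; rewrite in_cons cs orbT.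
Qed.

Lemma genT w : in_gen Phi w -> in_gen Phi w^T.
Proof.
case=> s sPhi ->; exists (rev s); last by rewrite trmx_refl_word.
by move=> a; rewrite mem_rev; apply: sPhi.
Qed.

Lemma gen_red w a : in_gen Phi w -> red a -> red (w *m a).
Proof.
move=> gen_w; apply: contra => /(gen_root (genT gen_w)).
by rewrite -scalemxAr orthomxK //; apply: gen_orthomx.
Qed.

Lemma genM w v : in_gen Phi w -> in_gen Phi v -> in_gen Phi (w *m v).
Proof.
case=> s sPhi -> [t tPhi ->]; exists (s ++ t); last by rewrite refl_word_cat.
by move=> a; rewrite mem_cat => /orP[/sPhi|/tPhi].
Qed.

Lemma gen_reflmx a : a \in Phi -> in_gen Phi (reflmx a).
Proof. by move=> aPhi; exists [:: a]; [move=> b /[!inE] /eqP -> | rewrite /= mulmx1]. Qed.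

Definition simple_word (s : seq 'I_m) : 'M[R]_n :=
  refl_word [seq D`_(nat_of_ord i) | i : 'I_m <- s].

Lemma simple_word_cons i s : simple_word (i :: s) = reflmx D`_i *m simple_word s.
Proof. by []. Qed.

Lemma simple_word_cat s t : simple_word (s ++ t) = simple_word s *m simple_word t.
Proof. by rewrite /simple_word map_cat refl_word_cat. Qed.

Lemma simple_word_rcons s i : simple_word (rcons s i) = simple_word s *m reflmx D`_i.
Proof. by rewrite /simple_word map_rcons refl_word_rcons. Qed.

Lemma gen_simple_word s : in_gen Phi (simple_word s).
Proof.
by exists [seq D`_(nat_of_ord i) | i : 'I_m <- s] => // a /mapP[i _ ->]; apply: simple_root.
Qed.

Definition red_pos_roots := [seq a <- Phi | red a && posb D a].
Local Notation X := red_pos_roots.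

Lemma red_pos_rootsP a : reflect [/\ a \in Phi, red a & pos a] (a \in X).
Proof.
rewrite mem_filter andbC; apply: (iffP and3P) => [[aPhi ra /pbP pa]|[aPhi ra pa]].
  by [].
by split => //; apply/pbP.
Qed.

Lemma uniq_red_pos_roots : uniq X.
Proof. by rewrite filter_uniq // uniq_roots. Qed.

Lemma red_pos_roots_antisym : {in X, forall x, - x \notin X}.
Proof.
move=> x /red_pos_rootsP[xPhi _ px]; apply/negP => /red_pos_rootsP[_ _ pNx].
exact: root_pos_negF xPhi px pNx.
Qed.

Lemma simple_red_pos (i : 'I_m) : D`_i \in X.
Proof.
by apply/red_pos_rootsP; split; [apply: simple_root | apply: red_simple | apply: pos_simple].
Qed.

Lemma red_root_pos_or_neg a : a \in Phi -> red a -> (a \in X) || (- a \in X).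
Proof.
move=> aPhi ra; case: (root_sign aPhi) => pa; apply/orP; [left|right]; apply/red_pos_rootsP.
  by [].
by rewrite redN rootN.
Qed.

Lemma signed_perm_gen w : in_gen Phi w -> signed_perm X (mulmx w).
Proof.
move=> gen_w; split.
- exact/orthomx_inj/gen_orthomx.
- by move=> x; rewrite mulmxN.
- move=> x /red_pos_rootsP[xPhi rx _].
  by apply: red_root_pos_or_neg; [apply: gen_root | apply: gen_red].
Qed.

Local Notation ninv w := (inv_count X (mulmx w)).

Lemma inv_count1 : ninv 1%:M = 0%N.
Proof. by apply/eqP/count_eq0P => x xX; rewrite mul1mx red_pos_roots_antisym. Qed.

Lemma reflmx_simple_inv (i : 'I_m) x :
  x \in X -> (- (reflmx D`_i *m x) \in X) = (x == D`_i).
Proof.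
move=> xX; have [->|xi] := eqVneq x D`_i.
  by rewrite reflmx_id ?simple_neq0 // opprK simple_red_pos.
case/red_pos_rootsP: (xX) => xPhi rx px; apply/negP => /red_pos_rootsP[_ _ pNsx].
apply: (root_pos_negF _ (reflmx_simple_pos xPhi rx px xi) pNsx).
by rewrite reflmx_root ?simple_root.
Qed.

Lemma inv_count_reflmx_simple (i : 'I_m) : ninv (reflmx D`_i) = 1%N.
Proof.
rewrite /inv_count (eq_in_count (a2 := pred1 D`_i)) => [|x xX]; last exact: reflmx_simple_inv.
by rewrite count_uniq_mem ?uniq_red_pos_roots ?simple_red_pos.
Qed.

Lemma inv_count_mul_simple w (i : 'I_m) : in_gen Phi w ->
  (ninv (w *m reflmx D`_i) + 2 * (- (w *m D`_i) \in X) = ninv w + 1)%N.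
Proof.
move=> gen_w; have gen_si := gen_reflmx (simple_root i).
have := inv_count_cocycle uniq_red_pos_roots red_pos_roots_antisym
  (signed_perm_gen gen_w) (signed_perm_gen gen_si).
rewrite inv_count_reflmx_simple.
have -> : inv_count X (mulmx w \o mulmx (reflmx D`_i)) = ninv (w *m reflmx D`_i).
  by apply: eq_count => x /=; rewrite mulmxA.
rewrite (eq_in_count (a2 := fun x => (x == D`_i) && (- (w *m D`_i) \in X))); last first.
  move=> x xX /=; rewrite reflmx_simple_inv //; case: eqP => //= ->.
  by rewrite reflmx_id ?simple_neq0 // mulmxN.
case: (- (w *m D`_i) \in X); last first.
  by rewrite (eq_count (a2 := pred0)) ?count_pred0 // => x; rewrite andbF.
rewrite (eq_count (a2 := pred1 D`_i)) => [|x]; last by rewrite /= andbT.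
by rewrite count_uniq_mem ?uniq_red_pos_roots ?simple_red_pos.
Qed.

(* A positive root that is not a multiple of a simple root has positive inner
   product with some simple root [D`_j] of its support, and [s_j] lowers its height. *)
Lemma pos_root_descent a (k : 'I_m -> nat) : a \in Phi -> a = \sum_j (k j)%:R *: D`_j ->
  (forall j, exists2 l, l != j & k l != 0%N) ->
  exists (j : 'I_m) (k' : 'I_m -> nat),
    reflmx D`_j *m a = \sum_l (k' l)%:R *: D`_l /\ (\sum_l k' l < \sum_l k l)%N.
Proof.
move=> aPhi ea supp.
have [j kja] : exists j, 0 < (k j)%:R * dot D`_j a.
  apply/existsP; apply: contraT; rewrite negb_exists => /forallP kaS.
  have : dot a a <= 0.
    by rewrite {1}ea dot_suml; apply: sumr_le0 => j _; rewrite dotZl leNgt kaS.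
  by rewrite leNgt dot_gt0 ?root_neq0.
have kj0 : k j != 0%N by apply: contraTneq kja => ->; rewrite mul0r ltxx.
have ja_gt0 : 0 < dot D`_j a by move: kja; rewrite pmulr_rgt0 // ltr0n lt0n.
have [l lj kl] := supp j.
have [k' ek'] := reflmx_simple_pos_coef aPhi ea (ex_intro2 _ _ l lj kl).
exists j, k'; split => //.
set z := cartan a D`_j.
have z_gt0 : 0 < z.
  by rewrite /z /cartan dotC divr_gt0 ?mulr_gt0 ?ltr0n // dot_gt0 ?simple_neq0.
have k'E l' : (k' l')%:R = (k l')%:R - (if l' == j then z else 0).
  move: l'; apply: simple_coef_inj; rewrite -ek' reflmxE -/z {1}ea.
  pose t l := (k l)%:R *: D`_l - (if l == j then z else 0) *: D`_l.
  rewrite [RHS](eq_bigr t); last first.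
    by move=> i _; rewrite scalerBl.
  rewrite sumrB; congr (_ - _).
  by rewrite (bigD1 j) //= eqxx big1 ?addr0 // => i /negbTE ->; rewrite scale0r.
have sum_k' : \sum_l ((k' l)%:R : R) = \sum_l (k l)%:R - z.
  rewrite (eq_bigr _ (fun l _ => k'E l)) sumrB; congr (_ - _).
  by rewrite (bigD1 j) //= eqxx big1 ?addr0 // => i /negbTE ->.
by rewrite -(ltr_nat R) !natr_sum sum_k' ltrBlDr ltrDl.
Qed.

Lemma reflmx_pos_root_word a (k : 'I_m -> nat) : a \in Phi ->
  a = \sum_j (k j)%:R *: D`_j -> exists s, reflmx a = simple_word s.
Proof.
have [h] := ubnP (\sum_j k j); elim: h a k => // h IHh a k hk aPhi ea.
case: (boolP [exists j, [forall l, (l != j) ==> (k l == 0%N)]]).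
  case/existsP=> j /forallP kS.
  have ea' : a = (k j)%:R *: D`_j.
    rewrite ea (bigD1 j) //= big1 ?addr0 // => l lj.
    by have := kS l; rewrite lj => /eqP ->; rewrite scale0r.
  have kj0 : (k j)%:R != 0 :> R.
    by apply: contraNneq (root_neq0 aPhi) => kj0; rewrite ea' kj0 scale0r.
  by exists [:: j]; rewrite ea' reflmxZ // simple_word_cons mulmx1.
rewrite negb_exists => /forallP kS.
have supp j : exists2 l, l != j & k l != 0%N.
  by have := kS j; rewrite negb_forall => /existsP[l]; rewrite negb_imply => /andP[]; exists l.
have [j [k' [ek' lt_k'k]]] := pos_root_descent aPhi ea supp.
have [s es] := IHh _ _ (leq_trans lt_k'k hk) (reflmx_root (simple_root j) aPhi) ek'.
have ea2 : a = reflmx D`_j *m (reflmx D`_j *m a).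
  by rewrite mulmxA reflmxK ?simple_neq0 ?mul1mx.
exists (j :: rcons s j); rewrite simple_word_cons simple_word_rcons -es {1}ea2.
rewrite -reflmx_conj; last exact/orthomx_reflmx/simple_neq0.
by rewrite trmx_reflmx !mulmxA.
Qed.

Lemma reflmx_root_word a : a \in Phi -> exists s, reflmx a = simple_word s.
Proof.
move=> aPhi; case: (root_sign aPhi) => -[k ek]; first exact: reflmx_pos_root_word aPhi ek.
by rewrite -reflmxN; apply: reflmx_pos_root_word (rootN aPhi) ek.
Qed.

Lemma gen_simple_wordP w : in_gen Phi w -> exists s, w = simple_word s.
Proof.
case=> t tPhi ->; elim: t tPhi => [|a t IHt] tPhi; first by exists [::].
have [s1 e1] := reflmx_root_word (tPhi a (mem_head _ _)).
have [s2 e2] : exists s, refl_word t = simple_word s.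
  by apply: IHt => b bt; apply: tPhi; rewrite in_cons bt orbT.
by exists (s1 ++ s2); rewrite simple_word_cat /= e1 e2.
Qed.

Lemma inv_count_simple_word s : (ninv (simple_word s) <= size s)%N.
Proof.
elim/last_ind: s => [|s i IHs]; first by rewrite inv_count1.
have := inv_count_mul_simple i (gen_simple_word s).
by rewrite -simple_word_rcons size_rcons; lia.
Qed.

Lemma simple_word_exchange s (i : 'I_m) : pos (- (simple_word s *m D`_i)) ->
  exists s', size s' = (size s).-1 /\ simple_word s *m reflmx D`_i = simple_word s'.
Proof.
elim: s => [|j t IHt] pNsi.
  by exfalso; move: pNsi; rewrite mul1mx; apply: root_pos_negF (simple_root i) (pos_simple i).
have tiPhi := gen_root (gen_simple_word t) (simple_root i).
have tio : orthomx (simple_word t) by apply/gen_orthomx/gen_simple_word.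
case: (root_sign tiPhi) => [pti|pNti]; last first.
  have [t' [st' et']] := IHt pNti.
  exists (j :: t'); split; last by rewrite simple_word_cons -mulmxA et'.
  have t0 : t != [::].
    apply/eqP => t0; move: pNti; rewrite t0 mul1mx.
    exact: root_pos_negF (simple_root i) (pos_simple i).
  by rewrite /= st' prednK // lt0n size_eq0.
have tiE : simple_word t *m D`_i = D`_j.
  apply/eqP; apply: contraT => tij; exfalso.
  have rti := gen_red (gen_simple_word t) (red_simple i).
  apply: (root_pos_negF _ (reflmx_simple_pos tiPhi rti pti tij)).
    by apply: reflmx_root => //; apply: simple_root.
  by move: pNsi; rewrite simple_word_cons -mulmxA.
exists t; split => //; rewrite simple_word_cons -tiE -reflmx_conj //.
have [tTt _] := tio.
by rewrite -!mulmxA (mulmxA _ (simple_word t)) tTt mul1mx reflmxK ?simple_neq0 // mulmx1.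
Qed.

Lemma inv_count0_simple_word s : ninv (simple_word s) = 0%N -> simple_word s = 1%:M.
Proof.
have [k] := ubnP (size s); elim: k s => // k IHk s; case/lastP: s => [//|s i] hs ninv0.
have gen_si := gen_simple_word (rcons s i).
have siPhi := gen_root gen_si (simple_root i).
have := red_root_pos_or_neg siPhi (gen_red gen_si (red_simple i)).
have /eqP/count_eq0P noinv := ninv0.
rewrite (negbTE (noinv _ (simple_red_pos i))) orbF.
case/red_pos_rootsP => _ _.
rewrite simple_word_rcons -mulmxA reflmx_id ?simple_neq0 // mulmxN.
move/simple_word_exchange => [s' [ss' es']].
rewrite es'; apply: IHk.
  by rewrite ss'; move: hs; rewrite size_rcons; lia.
by rewrite -es' -simple_word_rcons.
Qed.

Lemma inv_count0_simple_pos w :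
  in_gen Phi w -> (forall i : 'I_m, pos (w *m D`_i)) -> ninv w = 0%N.
Proof.
move=> gen_w pwD; apply/eqP/count_eq0P => x /red_pos_rootsP[xPhi _ [c ex]].
apply/negP => /red_pos_rootsP[_ _]; apply: (root_pos_negF (gen_root gen_w xPhi)).
by rewrite ex mulmx_sumr; apply: pos_sum => j _; rewrite -scalemxAr; apply/posZ/pwD.
Qed.

Lemma has_word_inv_count k w : in_gen Phi w -> ninv w = k -> has_word D w k.
Proof.
elim: k w => [|k IHk] w gen_w ninvw.
  have [s ws] := gen_simple_wordP gen_w.
  by exists [::]; split => //; rewrite ws inv_count0_simple_word // -ws.
have [i wDi] : exists i : 'I_m, - (w *m D`_i) \in X.
  apply/existsP; apply: contraT; rewrite negb_exists => /forallP wDS.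
  suff : ninv w = 0%N by rewrite ninvw.
  apply: inv_count0_simple_pos => // i.
  have wiPhi := gen_root gen_w (simple_root i).
  have := red_root_pos_or_neg wiPhi (gen_red gen_w (red_simple i)).
  by rewrite (negbTE (wDS i)) orbF => /red_pos_rootsP[].
have := inv_count_mul_simple i gen_w; rewrite wDi ninvw => e.
have [s [ss es]] : has_word D (w *m reflmx D`_i) k.
  by apply: IHk; [apply/genM/gen_reflmx/simple_root | lia].
exists (rcons s i); split; first by rewrite size_rcons ss.
change (w = simple_word (rcons s i)); change (w *m reflmx D`_i = simple_word s) in es.
by rewrite simple_word_rcons -es -mulmxA reflmxK ?simple_neq0 ?mulmx1.
Qed.

Lemma len_inv_count w : in_gen Phi w -> len D w = ninv w.
Proof.
move=> gen_w; rewrite /len; case: excluded_middle_informative => [ex|]; last first.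
  by case; exists (ninv w); apply/pbP/has_word_inv_count.
case: ex_minnP => k /pbP[s [<- ws]] kmin; apply/eqP; rewrite eqn_leq.
rewrite kmin /=; last exact/pbP/has_word_inv_count.
by rewrite ws; apply: (inv_count_simple_word s).
Qed.

(** * The standard Levi subgroup M *)

Variable T : {set 'I_m}.
Local Notation Th := (Theta T).
Local Notation TM := (ThetaMx T).
Local Notation prj := (proj T).

Lemma size_Theta : size Th = #|T|.
Proof. by rewrite size_map -cardE. Qed.

Definition theta_idx (k : 'I_(size Th)) : 'I_m := enum_val (cast_ord size_Theta k).

Lemma theta_idx_in k : theta_idx k \in T.
Proof. exact: enum_valP. Qed.

Lemma theta_idx_inj : injective theta_idx.
Proof. by move=> k1 k2 /enum_val_inj /cast_ord_inj. Qed.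

Lemma theta_idx_onto j : j \in T -> exists k, theta_idx k = j.
Proof.
move=> jT; exists (cast_ord (esym size_Theta) (enum_rank_in jT j)).
by rewrite /theta_idx cast_ordKV enum_rankK_in.
Qed.

Lemma nth_Theta (k : 'I_(size Th)) : Th`_k = D`_(theta_idx k).
Proof.
rewrite /Theta (nth_map (theta_idx k)); last by rewrite -cardE -size_Theta.
by rewrite /theta_idx {2}(enum_val_nth (enum_val (cast_ord size_Theta k))).
Qed.

Lemma mul_trThetaMx (y : 'cV[R]_(size Th)) : TM^T *m y = \sum_k y k 0 *: Th`_k.
Proof.
apply/matrixP => i j; rewrite (ord1 j) !mxE summxE; apply: eq_bigr => k _.
by rewrite !mxE mulrC.
Qed.

Definition theta_coef (y : 'I_(size Th) -> R) (j : 'I_m) : R :=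
  \sum_k (if theta_idx k == j then y k else 0).

Lemma Theta_comb (y : 'I_(size Th) -> R) :
  \sum_k y k *: Th`_k = \sum_j theta_coef y j *: D`_j.
Proof.
under [RHS]eq_bigr do rewrite scaler_suml.
rewrite exchange_big /=; apply: eq_bigr => k _.
rewrite (bigD1 (theta_idx k)) //= eqxx big1 ?addr0 ?nth_Theta // => j /negbTE.
by rewrite eq_sym => ->; rewrite scale0r.
Qed.

Lemma theta_coef_idx y k : theta_coef y (theta_idx k) = y k.
Proof.
rewrite /theta_coef (bigD1 k) //= eqxx big1 ?addr0 // => k' /negbTE k'k.
by case: eqP => // /theta_idx_inj ek'; rewrite ek' eqxx in k'k.
Qed.

Lemma theta_coef_out y j : j \notin T -> theta_coef y j = 0.
Proof.
move=> jT; rewrite /theta_coef big1 // => k _; case: eqP => // ekj.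
by move: jT; rewrite -ekj theta_idx_in.
Qed.

Definition in_span (x : V) := exists y : 'cV[R]_(size Th), x = TM^T *m y.

Lemma in_span_ThetaP x : in_span_Theta T x <-> in_span x.
Proof.
split=> [[c ->]|[y ->]]; last by exists (fun k => y k 0); rewrite mul_trThetaMx.
by exists (\col_k c k); rewrite mul_trThetaMx; apply: eq_bigr => k _; rewrite mxE.
Qed.

Lemma in_span_coef_out x (r : 'I_m -> R) : x = \sum_j r j *: D`_j -> in_span x ->
  forall j, j \notin T -> r j = 0.
Proof.
move=> ex [y ey] j jT; rewrite ey mul_trThetaMx Theta_comb in ex.
by rewrite -(simple_coef_inj ex j) theta_coef_out.
Qed.

Lemma in_span0 : in_span 0.
Proof. by exists 0; rewrite mulmx0. Qed.

Lemma in_spanD x y : in_span x -> in_span y -> in_span (x + y).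
Proof. by case=> a -> [b ->]; exists (a + b); rewrite mulmxDr. Qed.

Lemma in_spanZ t x : in_span x -> in_span (t *: x).
Proof. by case=> a ->; exists (t *: a); rewrite scalemxAr. Qed.

Lemma in_spanB x y : in_span x -> in_span y -> in_span (x - y).
Proof. by move=> xs ys; apply: in_spanD xs _; rewrite -scaleN1r; apply: in_spanZ. Qed.

Lemma in_span_sum (I : Type) (r : seq I) (P : pred I) (F : I -> V) :
  (forall i, P i -> in_span (F i)) -> in_span (\sum_(i <- r | P i) F i).
Proof. by move=> h; apply: big_ind => //; [exact: in_span0 | exact: in_spanD]. Qed.

Lemma in_span_Theta_nth (k : 'I_(size Th)) : in_span Th`_k.
Proof.
exists (\col_i (i == k)%:R); rewrite mul_trThetaMx (bigD1 k) //= big1 ?addr0.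
  by rewrite mxE eqxx scale1r.
by move=> i /negbTE ik; rewrite mxE ik scale0r.
Qed.

Lemma in_span_simple j : j \in T -> in_span D`_j.
Proof. by move=> /theta_idx_onto[k <-]; rewrite -nth_Theta; apply: in_span_Theta_nth. Qed.

Lemma in_span_simple_comb (r : 'I_m -> R) : (forall j, j \notin T -> r j = 0) ->
  in_span (\sum_j r j *: D`_j).
Proof.
move=> r0; apply: in_span_sum => j _; have [jT|jT] := boolP (j \in T).
  exact/in_spanZ/in_span_simple.
by rewrite r0 // scale0r; apply: in_span0.
Qed.

Lemma trThetaMx_free (v : 'cV[R]_(size Th)) : TM^T *m v = 0 -> v = 0.
Proof.
rewrite mul_trThetaMx Theta_comb => e.
have e' : \sum_j theta_coef (fun k => v k 0) j *: D`_j = \sum_(j < m) (0 : R) *: D`_j.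
  by rewrite e big1 // => j _; rewrite scale0r.
apply/matrixP => k j; rewrite (ord1 j) mxE.
by rewrite -(theta_coef_idx (fun k => v k 0)) (simple_coef_inj e').
Qed.

Lemma gram_unit : TM *m TM^T \in unitmx.
Proof.
rewrite -row_free_unit; apply: inj_row_free => v vG.
have : dot (TM^T *m v^T) (TM^T *m v^T) = 0.
  by rewrite /dot trmx_mul !trmxK -(mulmxA v) (mulmxA TM) (mulmxA v) vG !mul0mx mxE.
move/eqP; rewrite dot_eq0 => /eqP /trThetaMx_free v0.
by rewrite -[v]trmxK v0 trmx0.
Qed.

Definition span_projmx := TM^T *m invmx (TM *m TM^T) *m TM.

Lemma span_projmxT : span_projmx *m TM^T = TM^T.
Proof. by rewrite /span_projmx -!mulmxA mulVmx ?gram_unit // mulmx1. Qed.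

Lemma ThetaMx_proj x : TM *m prj x = 0.
Proof.
rewrite /proj mulmxBr mulmxA.
by rewrite /span_projmx !mulmxA mulmxV ?gram_unit // mul1mx subrr.
Qed.

Lemma proj_eq0 x : prj x = 0 <-> in_span x.
Proof.
split=> [/eqP|[y ->]].
  rewrite /proj subr_eq0 => /eqP ->.
  by exists (invmx (TM *m TM^T) *m TM *m x); rewrite !mulmxA.
by rewrite /proj mulmxA span_projmxT subrr.
Qed.

Lemma projD x y : prj (x + y) = prj x + prj y.
Proof. by rewrite /proj mulmxDr opprD addrACA. Qed.

Lemma projZ t x : prj (t *: x) = t *: prj x.
Proof. by rewrite /proj scalerBr scalemxAr. Qed.

Lemma projN x : prj (- x) = - prj x.
Proof. by rewrite -!scaleN1r projZ. Qed.

Lemma dot_span_proj y x : dot (TM^T *m y) (prj x) = 0.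
Proof. by rewrite /dot trmx_mul trmxK -mulmxA ThetaMx_proj mulmx0 mxE. Qed.

Lemma proj_equivariant (u : 'M[R]_n) : orthomx u ->
  (forall x, in_span x -> in_span (u *m x)) -> (forall x, in_span x -> in_span (u^T *m x)) ->
  forall x, u *m prj x = prj (u *m x).
Proof.
move=> uo uspan uTspan x; apply/eqP; rewrite -subr_eq0 -dot_eq0; apply/eqP.
set z := _ - _.
have [y0 ez] : in_span z.
  have K_span v : in_span (span_projmx *m v).
    by exists (invmx (TM *m TM^T) *m TM *m v); rewrite !mulmxA.
  have -> : z = span_projmx *m (u *m x) - u *m (span_projmx *m x).
    by rewrite /z /proj mulmxBr opprB addrC addrA addrNK addrC.
  by apply: in_spanB; [apply: K_span | apply/uspan/K_span].
rewrite {1}ez /z dotDr dotNr dot_span_proj oppr0 addr0 dot_mulmxr.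
by have [y' ->] := uTspan _ (ex_intro _ y0 erefl); rewrite dot_span_proj.
Qed.

Local Notation PM := (PhiM T Phi).

Lemma PhiMP a : reflect (a \in Phi /\ in_span a) (a \in PM).
Proof.
rewrite /PhiM mem_filter; apply: (iffP andP) => [[/pbP/in_span_ThetaP sa aPhi]|[aPhi sa]].
  by [].
by split=> //; apply/pbP/in_span_ThetaP.
Qed.

(* [u^-1 M u = M], with [u^-1 = u^T] *)
Definition normM (u : 'M[R]_n) := [/\ in_gen Phi u, {in PM, forall a, u *m a \in PM} &
  {in PM, forall a, u^T *m a \in PM}].

Lemma normMT u : normM u -> normM u^T.
Proof. by case=> gen_u uPM uTPM; split; rewrite ?trmxK //; apply: genT. Qed.

Lemma normMM u v : normM u -> normM v -> normM (u *m v).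
Proof.
case=> gen_u uPM uTPM [gen_v vPM vTPM]; split; first exact: genM.
  by move=> a aPM; rewrite -mulmxA; apply/uPM/vPM.
by move=> a aPM; rewrite trmx_mul -mulmxA; apply/vTPM/uTPM.
Qed.

Lemma normM_orthomx u : normM u -> orthomx u.
Proof. by case=> /gen_orthomx. Qed.

Lemma normM_span u x : normM u -> in_span x -> in_span (u *m x).
Proof.
case=> _ uPM _ [y ->]; rewrite mul_trThetaMx mulmx_sumr; apply: in_span_sum => k _.
rewrite -scalemxAr; apply: in_spanZ.
have /uPM /PhiMP[] // : Th`_k \in PM.
by apply/PhiMP; split; [rewrite nth_Theta; apply: simple_root | apply: in_span_Theta_nth].
Qed.

Lemma normM_proj u x : normM u -> u *m prj x = prj (u *m x).
Proof.
move=> nu; apply: proj_equivariant; first exact: normM_orthomx.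
  by move=> y; apply: normM_span.
by move=> y; apply/normM_span/normMT.
Qed.

Lemma normM_proj_neq0 u x : normM u -> prj x != 0 -> prj (u *m x) != 0.
Proof. by move=> nu; rewrite -normM_proj // orthomx_eq0 //; apply: normM_orthomx. Qed.

Local Notation SAM := (SigmaAM T Phi).
Local Notation SP := (SigmaP T Phi).

Lemma SigmaAMP c : reflect (exists a, [/\ a \in Phi, prj a != 0 & c = prj a]) (c \in SAM).
Proof.
rewrite /SigmaAM mem_undup; apply: (iffP mapP) => [[a]|[a [aPhi a0 ->]]].
  by rewrite mem_filter => /andP[a0 aPhi] ->; exists a.
by exists a; rewrite // mem_filter a0.
Qed.

Lemma SigmaPP c : reflect (exists a, [/\ a \in Phi, pos a, prj a != 0 & c = prj a]) (c \in SP).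
Proof.
rewrite /SigmaP mem_undup; apply: (iffP mapP) => [[a]|[a [aPhi pa a0 ->]]].
  by rewrite mem_filter => /andP[/andP[/pbP pa a0] aPhi] ->; exists a.
exists a => //; rewrite mem_filter aPhi a0 !andbT.
exact/pbP.
Qed.

Lemma SigmaP_AM c : c \in SP -> c \in SAM.
Proof. by case/SigmaPP => a [aPhi _ a0 ->]; apply/SigmaAMP; exists a. Qed.

Lemma SigmaAM_neq0 c : c \in SAM -> c != 0.
Proof. by case/SigmaAMP => a [_ a0 ->]. Qed.

Lemma SigmaAMN c : c \in SAM -> - c \in SAM.
Proof.
case/SigmaAMP => a [aPhi a0 ->]; apply/SigmaAMP; exists (- a).
by rewrite projN oppr_eq0 a0 rootN.
Qed.

(* A positive combination of positive roots lying in span Theta has all its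
   coefficients outside Theta zero. *)
Lemma proj_pos_antiparallel a1 a2 (t : R) : pos a1 -> pos a2 -> 0 < t ->
  prj a1 = - (t *: prj a2) -> prj a1 = 0.
Proof.
move=> [k ek] [k' ek'] t_gt0 e.
have sa : in_span (a1 + t *: a2) by apply/proj_eq0; rewrite projD projZ e addNr.
have e2 : a1 + t *: a2 = \sum_j ((k j)%:R + t * (k' j)%:R) *: D`_j.
  rewrite ek ek' scaler_sumr -big_split; apply: eq_bigr => j _.
  by rewrite scalerDl scalerA.
apply/proj_eq0; rewrite ek; apply: in_span_simple_comb => j jT.
have /eqP := in_span_coef_out e2 sa jT.
by rewrite paddr_eq0 ?ler0n ?mulr_ge0 ?ler0n ?ltW // => /andP[/eqP].
Qed.

Lemma SigmaP_antisym c : c \in SP -> - c \in SP -> False.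
Proof.
case/SigmaPP => a1 [_ pa1 a10 e1] /SigmaPP[a2 [_ pa2 _ e2]].
have := @proj_pos_antiparallel a1 a2 1 pa1 pa2 ltr01.
by rewrite scale1r -e2 -e1 opprK => /(_ erefl) c0; move: a10; rewrite -e1 c0 eqxx.
Qed.

Lemma SigmaAM_sign c : c \in SAM -> (c \in SP) || (- c \in SP).
Proof.
case/SigmaAMP => a [aPhi a0 ->]; apply/orP; case: (root_sign aPhi) => pa; [left|right].
  by apply/SigmaPP; exists a.
by apply/SigmaPP; exists (- a); rewrite projN oppr_eq0 a0 rootN.
Qed.

Lemma SigmaP_scale c (t : R) : c \in SP -> 0 < t -> t *: c \in SAM -> t *: c \in SP.
Proof.
move=> cSP t_gt0 /SigmaAM_sign /orP[] // /SigmaPP[a2 [_ pa2 a20 e2]].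
case/SigmaPP: cSP => a1 [_ pa1 _ e1]; exfalso.
have := proj_pos_antiparallel pa2 pa1 t_gt0; rewrite -e1 -e2 => /(_ erefl) e0.
by move: a20; rewrite -e2 e0 eqxx.
Qed.

Lemma pos_projP a : a \in Phi -> prj a != 0 -> pos a <-> prj a \in SP.
Proof.
move=> aPhi a0; split=> [pa|aSP]; first by apply/SigmaPP; exists a.
case: (root_sign aPhi) => // pNa; exfalso; apply: (SigmaP_antisym aSP).
by apply/SigmaPP; exists (- a); rewrite projN oppr_eq0 a0 rootN.
Qed.

Lemma normM_neg_projP u a : normM u -> a \in Phi -> prj a != 0 ->
  pos (- (u *m a)) <-> - (u *m prj a) \in SP.
Proof.
move=> nu aPhi a0; have [gen_u _ _] := nu.
rewrite normM_proj // -projN; apply: pos_projP; first by apply/rootN/gen_root.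
by rewrite projN oppr_eq0; apply: normM_proj_neq0.
Qed.

Lemma normM_SigmaAM u c : normM u -> c \in SAM -> u *m c \in SAM.
Proof.
move=> nu /SigmaAMP[a [aPhi a0 ->]]; have [gen_u _ _] := nu.
apply/SigmaAMP; exists (u *m a); rewrite normM_proj //.
by rewrite gen_root // normM_proj_neq0.
Qed.

Definition redAM (c : V) := forall t : R, 0 < t < 1 -> t *: c \notin SAM.

Lemma normM_redAM u c : normM u -> redAM c -> redAM (u *m c).
Proof.
move=> nu rc t t01; apply: (contraNN _ (rc t t01)) => /(normM_SigmaAM (normMT nu)).
by rewrite -scalemxAr orthomxK //; apply: normM_orthomx.
Qed.

Lemma redAMN c : redAM c -> redAM (- c).
Proof.
move=> rc t t01; apply: (contraNN _ (rc t t01)) => /SigmaAMN.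
by rewrite scalerN opprK.
Qed.

Local Notation Y := (Sred SP).

Lemma red_SigmaPP c : reflect (c \in SP /\ redAM c) (c \in Y).
Proof.
rewrite /Sred mem_filter; apply: (iffP andP) => [[/pbP rc cSP]|[cSP rc]].
  split=> // t t01; apply/negP => tcAM.
  by have := rc t t01; rewrite SigmaP_scale //; case/andP: t01.
by split=> //; apply/pbP => t t01; apply: (contraNN _ (rc t t01)); apply: SigmaP_AM.
Qed.

Lemma uniq_red_SigmaP : uniq Y.
Proof. by rewrite filter_uniq // undup_uniq. Qed.

Lemma red_SigmaP_antisym : {in Y, forall c, - c \notin Y}.
Proof.
move=> c /red_SigmaPP[cSP _]; apply/negP => /red_SigmaPP[NcSP _].
exact: SigmaP_antisym cSP NcSP.
Qed.

Lemma signed_perm_normM u : normM u -> signed_perm Y (mulmx u).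
Proof.
move=> nu; split.
- exact/orthomx_inj/normM_orthomx.
- by move=> x; rewrite mulmxN.
- move=> c /red_SigmaPP[cSP rc].
  have ucAM := normM_SigmaAM nu (SigmaP_AM cSP); have ruc := normM_redAM nu rc.
  by case/orP: (SigmaAM_sign ucAM) => ucSP; apply/orP; [left|right];
    apply/red_SigmaPP; split => //; apply: redAMN.
Qed.

Lemma SigmaWPbarE w c : orthomx w -> (c \in SigmaWPbar T Phi w) = (- (w^T *m c) \in SP).
Proof.
move=> wo; apply/mapP/idP => [[b /mapP[b' b'SP ->] ->]|NwcSP].
  by rewrite !mulmxN orthomxK // opprK.
by exists (w^T *m c); rewrite ?orthomxKV //; apply/mapP; exists (- (w^T *m c)); rewrite ?opprK.
Qed.

Lemma lM_inv_count_tr w : normM w -> lM T Phi w = inv_count Y (mulmx w^T).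
Proof.
move=> nw; have wo := normM_orthomx nw.
rewrite /lM /inv_count; apply: eq_in_count => c cY /=.
case/red_SigmaPP: (cY) => cSP rc.
rewrite /Sred mem_filter SigmaWPbarE //; apply/andP/red_SigmaPP => [[_ NwcSP]|[NwcSP _]].
  by split=> //; apply/redAMN/normM_redAM/rc/normMT.
split=> //; apply/pbP => t t01; apply: (contraNN _ (rc t t01)).
rewrite SigmaWPbarE // => /SigmaP_AM/SigmaAMN; rewrite opprK => /(normM_SigmaAM nw).
by rewrite -!scalemxAr orthomxKV.
Qed.

Lemma lM_inv_count w : normM w -> lM T Phi w = inv_count Y (mulmx w).
Proof.
move=> nw; have wo := normM_orthomx nw; rewrite lM_inv_count_tr //.
apply: (inv_count_inv uniq_red_SigmaP (signed_perm_normM (normMT nw)) (signed_perm_normM nw)).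
  by move=> x; rewrite orthomxKV.
by move=> x; rewrite orthomxK.
Qed.

Definition nsmaller_multiples (c : V) :=
  count (fun x => pb (exists2 t : R, 0 < t < 1 & x = t *: c)) SAM.

Lemma SigmaP_red_multiple c : c \in SP -> exists2 s : R, 0 < s & s *: c \in Y.
Proof.
have [k] := ubnP (nsmaller_multiples c); elim: k c => // k IHk c hk cSP.
case: (pbP (redAM c)) => [rc|nrc].
  by exists 1; rewrite ?ltr01 // scale1r; apply/red_SigmaPP.
have [t /[dup] t01 /andP[t_gt0 t_lt1] tcAM] : exists2 t : R, 0 < t < 1 & t *: c \in SAM.
  case: (pbP (exists2 t : R, 0 < t < 1 & t *: c \in SAM)) => // nex; case: nrc => t t01.
  by apply/negP => tcAM; apply: nex; exists t.
have tcSP : t *: c \in SP by apply: SigmaP_scale.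
have lt_tc_c : (nsmaller_multiples (t *: c) < nsmaller_multiples c)%N.
  apply: (sub_in_count_lt (x0 := t *: c)) => //.
  - move=> x _ /pbP[t' /andP[t'_gt0 t'_lt1] ->]; apply/pbP; exists (t' * t).
      by rewrite mulr_gt0 //= -(mulr1 1) ltr_pM // ?ltW.
    by rewrite scalerA.
  - by apply/pbP; exists t.
  - apply/negP => /pbP[t' /andP[_ t'_lt1] e].
    have /eqP : (1 - t') *: (t *: c) = 0 by rewrite scalerBl scale1r -e subrr.
    rewrite scaler_eq0 (negbTE (SigmaAM_neq0 tcAM)) orbF subr_eq0 => /eqP t'1.
    by move: t'_lt1; rewrite -t'1 ltxx.
have [s s_gt0 stcY] := IHk _ (leq_trans lt_tc_c hk) tcSP.
by exists (s * t); rewrite ?mulr_gt0 // -scalerA.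
Qed.

Lemma normM_WM w : in_WM T Phi w -> normM w.
Proof.
case=> gen_w wPM _; split => // a aPM; first by rewrite -wPM map_f.
by move: aPM; rewrite -wPM => /mapP[b bPM ->]; rewrite orthomxK //; apply: gen_orthomx.
Qed.

(* minimality of the length of [w] in [w W^M] forbids [l(w s_j) < l(w)] *)
Lemma WM_simple_pos w j : in_WM T Phi w -> j \in T -> pos (w *m D`_j).
Proof.
case=> gen_w _ wmin jT.
have gen_wj := genM gen_w (gen_reflmx (simple_root j)).
have : in_gen PM (reflmx D`_j).
  exists [:: D`_j]; last by rewrite /= mulmx1.
  move=> b /[!inE] /eqP ->; apply/PhiMP.
  by split; [apply: simple_root | apply: in_span_simple].
move/wmin; rewrite !len_inv_count //.
have := inv_count_mul_simple j gen_w.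
have [_|NwjX _ _] := boolP (- (w *m D`_j) \in X); first by lia.
have := red_root_pos_or_neg (gen_root gen_w (simple_root j)) (gen_red gen_w (red_simple j)).
by rewrite (negbTE NwjX) orbF => /red_pos_rootsP[].
Qed.

Lemma WM_pos_span w a : in_WM T Phi w -> pos a -> in_span a -> pos (w *m a).
Proof.
move=> Ww [k ek] sa; rewrite ek mulmx_sumr; apply: pos_sum => j _; rewrite -scalemxAr.
have [jT|jT] := boolP (j \in T); first exact/posZ/WM_simple_pos.
by rewrite (in_span_coef_out ek sa jT) scale0r; apply: pos0.
Qed.

Lemma red_SigmaP_lift c : c \in Y -> exists2 b, b \in X & prj b = c.
Proof.
case/red_SigmaPP => /SigmaPP[b [bPhi pb b0 ->]] rc; exists b => //.
apply/red_pos_rootsP; split => //; apply/negP => hbPhi.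
have : 2^-1 *: prj b \in SAM.
  by apply/SigmaAMP; exists (2^-1 *: b); rewrite projZ scaler_eq0 negb_or invr_eq0 pnatr_eq0.
by apply/negP/rc; rewrite invr_gt0 ltr0n invf_lt1 ?ltr1n.
Qed.

Definition keeps_inversions (S : seq V) (w w' : 'M[R]_n) :=
  {in S, forall x, - (w' *m x) \in S -> - (w *m (w' *m x)) \in S}.

Lemma keeps_inversions_red_SigmaP w w' : normM w -> normM w' ->
  keeps_inversions X w w' ->
  keeps_inversions Y w w'.
Proof.
move=> nw nw' invX c cY /red_SigmaPP[Nw'cSP _].
have [[gen_w _ _] [gen_w' _ _]] := (nw, nw').
case/red_SigmaPP: (cY) => cSP rc; have [b bX ebc] := red_SigmaP_lift cY.
case/red_pos_rootsP: (bX) => bPhi rb pb.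
have b0 : prj b != 0 by rewrite ebc SigmaAM_neq0 ?SigmaP_AM.
have Nw'bX : - (w' *m b) \in X.
  apply/red_pos_rootsP; split; first exact/rootN/gen_root.
    by rewrite redN gen_red.
  by apply/(normM_neg_projP nw' bPhi b0); rewrite ebc.
have /red_pos_rootsP[_ _ pNwwb] := invX b bX Nw'bX.
apply/red_SigmaPP; split; last exact/redAMN/normM_redAM/normM_redAM.
rewrite -ebc mulmxA; apply/(normM_neg_projP (normMM nw nw') bPhi b0).
by rewrite -mulmxA.
Qed.

Lemma keeps_inversions_red_pos_roots w w' : normM w -> in_WM T Phi w' ->
  keeps_inversions Y w w' ->
  keeps_inversions X w w'.
Proof.
move=> nw Ww' invY b bX /red_pos_rootsP[_ _ pNw'b].
have nw' := normM_WM Ww'; have [[gen_w _ _] [gen_w' _ _]] := (nw, nw').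
case/red_pos_rootsP: (bX) => bPhi rb pb.
have b0 : prj b != 0.
  apply/eqP => /proj_eq0 sb; apply: (root_pos_negF (gen_root gen_w' bPhi) _ pNw'b).
  exact: WM_pos_span.
have [s s_gt0 sbY] := SigmaP_red_multiple ((pos_projP bPhi b0).1 pb).
have Nw'sbY : - (w' *m (s *: prj b)) \in Y.
  case/red_SigmaPP: sbY => sbSP rsb; apply/red_SigmaPP; split; last exact/redAMN/normM_redAM.
  rewrite -scalemxAr -scalerN; apply: SigmaP_scale => //.
    exact/(normM_neg_projP nw' bPhi b0).
  by rewrite scalerN scalemxAr; apply/SigmaAMN/normM_SigmaAM/SigmaP_AM.
have /red_SigmaPP[NwwsbSP _] := invY _ sbY Nw'sbY.
apply/red_pos_rootsP; split; first exact/rootN/gen_root/gen_root.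
  by rewrite redN !gen_red.
rewrite mulmxA; apply/(normM_neg_projP (normMM nw nw') bPhi b0).
have e : - (w *m w' *m prj b) = s^-1 *: - (w *m (w' *m (s *: prj b))).
  by rewrite -!scalemxAr scalerN scalerA mulVf ?gt_eqF // scale1r mulmxA.
rewrite e; apply: SigmaP_scale NwwsbSP _ _; first by rewrite invr_gt0.
rewrite -e; apply/SigmaAMN/normM_SigmaAM; first exact: normMM.
by apply/SigmaP_AM/(pos_projP bPhi b0).
Qed.

Lemma len_additiveP w w' : in_gen Phi w -> in_gen Phi w' ->
  (len D (w *m w') = len D w + len D w')%N <-> keeps_inversions X w w'.
Proof.
move=> gen_w gen_w'; have gen_ww' := genM gen_w gen_w'; rewrite !len_inv_count //.
have -> : ninv (w *m w') = inv_count X (mulmx w \o mulmx w').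
  by apply: eq_count => x /=; rewrite mulmxA.
apply: (inv_count_additive uniq_red_pos_roots red_pos_roots_antisym);
  exact: signed_perm_gen.
Qed.

Lemma lM_additiveP w w' : normM w -> normM w' ->
  (lM T Phi (w *m w') = lM T Phi w + lM T Phi w')%N <-> keeps_inversions Y w w'.
Proof.
move=> nw nw'; have nww' := normMM nw nw'; rewrite !lM_inv_count //.
have -> : inv_count Y (mulmx (w *m w')) = inv_count Y (mulmx w \o mulmx w').
  by apply: eq_count => x /=; rewrite mulmxA.
apply: (inv_count_additive uniq_red_SigmaP red_SigmaP_antisym);
  exact: signed_perm_normM.
Qed.

End RootSystem.

Theorem proposition1p1 (R : realFieldType) (n : nat)
    (Phi D : seq 'cV[R]_n) (T : {set 'I_(size D)}) :
  root_system Phi -> base Phi D ->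
  forall w w' : 'M[R]_n,
    in_WM T Phi w -> in_WM T Phi w' ->
    (lM T Phi (w *m w') = lM T Phi w + lM T Phi w')%N <->
    (len D (w *m w') = len D w + len D w')%N.
Proof.
move=> rsPhi baseD w w' Ww Ww'.
have [nw nw'] := (normM_WM rsPhi Ww, normM_WM rsPhi Ww').
have [[gen_w _ _] [gen_w' _ _]] := (nw, nw').
apply: (iff_trans (lM_additiveP rsPhi baseD nw nw')).
apply: iff_sym; apply: (iff_trans (len_additiveP rsPhi baseD gen_w gen_w')).
split; [exact: keeps_inversions_red_SigmaP | exact: keeps_inversions_red_pos_roots].
Qed.
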